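(* Let $A, E \in \mathbb{R}^{d_1\times d_2}$, let $B = A+E$, and let $d=\max\{d_1,d_2\}$. There exists a numerical constant $C_0>0$ such that for any $1\le r<d$: if $\sigma_r(A)>\sigma_{r+1}(A)$ and $\|E\|\le (\sigma_r(A)-\sigma_{r+1}(A))/2$, then $$\|B_r-A_r\|_{\mathrm F}\le C_0\sqrt{r}\,\|E\|\left(1+\frac{\sqrt{\sigma_{r+1}(A)\sigma_1(A)}}{\sigma_r(A)-\sigma_{r+1}(A)}\right).$$
   Context: For a matrix $M\in\mathbb{R}^{d_1\times d_2}$, $\sigma_1(M)\ge\sigma_2(M)\ge\cdots$ denote its singular values, and $M_r$ denotes its best rank-$r$ approximation (in Frobenius norm), i.e. the truncation of its singular value decomposition to the top $r$ singular values and vectors. $\|\cdot\|$ is the spectral norm and $\|\cdot\|_{\mathrm F}$ the Frobenius norm. *)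

From HB Require Import structures.
From mathcomp Require Import all_boot all_order all_algebra.
From mathcomp Require Import boolp classical_sets reals.
From mathcomp Require Import Rstruct.
From Stdlib Require Rdefinitions.
Notation R := Rdefinitions.R.

Set Implicit Arguments.
Unset Strict Implicit.
Unset Printing Implicit Defensive.

Import Order.TTheory GRing.Theory Num.Theory.
Local Open Scope ring_scope.
Local Open Scope classical_set_scope.

Definition vnorm (n : nat) (x : 'cV[R]_n) : R :=
  Num.sqrt (\sum_(i < n) x i 0 ^+ 2).

Definition frob (m n : nat) (M : 'M[R]_(m, n)) : R :=
  Num.sqrt (\sum_(i < m) \sum_(j < n) M i j ^+ 2).

Definition specnorm (m n : nat) (M : 'M[R]_(m, n)) : R :=
  sup [set vnorm (M *m x) | x in [set x : 'cV[R]_n | vnorm x <= 1]].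

Definition orthogonal (n : nat) (U : 'M[R]_n) : Prop := U *m U^T = 1%:M.

Definition diag_rect (m n : nat) (s : nat -> R) (r : nat) : 'M[R]_(m, n) :=
  \matrix_(i < m, j < n) (if (nat_of_ord i == nat_of_ord j) && (nat_of_ord i < r)%N
                           then s (nat_of_ord i) else 0).

(* (U, s, V) is a singular value decomposition of M:
   M = U * diag(s) * V^T with U, V orthogonal, and s (0-indexed: s k is the
   (k+1)-th singular value) nonnegative, nonincreasing, and 0 beyond
   min(m,n). *)
Definition is_svd (m n : nat) (M : 'M[R]_(m, n)) (U : 'M[R]_m) (s : nat -> R)
    (V : 'M[R]_n) : Prop :=
  [/\ orthogonal U /\ orthogonal V,
      (forall k, 0 <= s k),
      (forall k, s k.+1 <= s k),
      (forall k, (minn m n <= k)%N -> s k = 0) &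
      M = U *m diag_rect m n s (minn m n) *m V^T].

Definition svd_trunc (m n : nat) (U : 'M[R]_m) (s : nat -> R) (V : 'M[R]_n)
    (r : nat) : 'M[R]_(m, n) :=
  U *m diag_rect m n s r *m V^T.

(* Write B_r - A_r in the orthonormal bases (u_p) of left singular vectors
   of B and (v_q) of right singular vectors of A.  With x, y the overlaps of the
   right, resp. left, singular vectors of B and A, the coordinates are
     G_pq = [p < r] sB_p x_pq - [q < r] sA_q y_pq,
   while E = B - A has the two families of coordinates
     f_pq = sB_p x_pq - sA_q y_pq   and   h_pq = sB_p y_pq - sA_q x_pq.
   If p, q < r then G_pq = f_pq, and if p, q >= r then G_pq = 0.  If exactly one
   index is kept, Weyl's inequality and ||E|| <= gap/2 separate the two singular
   values by gap/2, and the identity (t^2 - s^2) y = s f + t h controls G_pq by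
   f_pq and h_pq.  Each row and column of (f, h) has squared norm at most
   2 ||E||^2, and only the r rows and r columns of index < r contribute, so
   ||B_r - A_r||_F^2 = sum G_pq^2 <= 64 r ||E||^2 (1 + sqrt(sA_r sA_0) / gap)^2. *)

From Pilot Require Import Defs.
From HB Require Import structures.
From mathcomp Require Import all_boot all_order all_algebra.
From mathcomp Require Import boolp classical_sets reals.
From mathcomp Require Import Rstruct.
From mathcomp Require Import lra ring zify.
From Stdlib Require Rdefinitions.
Import Order.TTheory GRing.Theory Num.Theory.
Local Open Scope ring_scope.
Set Implicit Arguments.
Unset Strict Implicit.
Unset Printing Implicit Defensive.

Definition dotv n (x y : 'cV[R]_n) : R := \sum_(i < n) x i 0 * y i 0.
Definition normsq n (x : 'cV[R]_n) : R := dotv x x.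

Section InnerProduct.
Variable n : nat.
Implicit Types x y z : 'cV[R]_n.

Lemma dotvE x y : dotv x y = (x^T *m y) 0 0.
Proof. by rewrite /dotv !mxE; apply: eq_bigr => i _; rewrite mxE. Qed.

Lemma dotvC x y : dotv x y = dotv y x.
Proof. by apply: eq_bigr => i _; rewrite mulrC. Qed.

Lemma dotvDr x y z : dotv x (y + z) = dotv x y + dotv x z.
Proof. by rewrite !dotvE mulmxDr mxE. Qed.

Lemma dotvZr a x y : dotv x (a *: y) = a * dotv x y.
Proof. by rewrite !dotvE -scalemxAr mxE. Qed.

Lemma dotvBr x y z : dotv x (y - z) = dotv x y - dotv x z.
Proof. by rewrite dotvDr -scaleN1r dotvZr mulN1r. Qed.

Lemma dotvDl x y z : dotv (x + y) z = dotv x z + dotv y z.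
Proof. by rewrite dotvC dotvDr !(dotvC z). Qed.

Lemma dotvZl a x y : dotv (a *: x) y = a * dotv x y.
Proof. by rewrite dotvC dotvZr dotvC. Qed.

Lemma dotv0r x : dotv x 0 = 0.
Proof. by rewrite -(scale0r 0) dotvZr mul0r. Qed.

Lemma normsq_ge0 x : 0 <= normsq x.
Proof. by apply: sumr_ge0 => i _; rewrite -expr2 sqr_ge0. Qed.

Lemma normsq_eq0 x : normsq x = 0 -> x = 0.
Proof.
move/eqP; rewrite psumr_eq0 => [/allP x0|i _]; last by rewrite -expr2 sqr_ge0.
apply/matrixP => i j; rewrite ord1 mxE.
by have /implyP/(_ isT) := x0 i (mem_index_enum i); rewrite mulf_eq0 orbb => /eqP.
Qed.

Lemma vnormE x : vnorm x = Num.sqrt (normsq x).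
Proof. by congr Num.sqrt; apply: eq_bigr => i _; rewrite expr2. Qed.

Lemma vnorm_ge0 x : 0 <= vnorm x.
Proof. exact: sqrtr_ge0. Qed.

Lemma vnorm_sqr x : vnorm x ^+ 2 = normsq x.
Proof. by rewrite vnormE sqr_sqrtr ?normsq_ge0. Qed.

Lemma normsqZ a x : normsq (a *: x) = a ^+ 2 * normsq x.
Proof. by rewrite /normsq dotvZl dotvZr mulrA expr2. Qed.

Lemma vnormZ a x : vnorm (a *: x) = `|a| * vnorm x.
Proof. by rewrite !vnormE normsqZ sqrtrM ?sqr_ge0 // sqrtr_sqr. Qed.

Lemma vnormN x : vnorm (- x) = vnorm x.
Proof. by rewrite -scaleN1r vnormZ normrN normr1 mul1r. Qed.

Lemma vnorm0 : vnorm (0 : 'cV[R]_n) = 0.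
Proof. by rewrite vnormE /normsq dotv0r sqrtr0. Qed.

Lemma dotv_sqr_le x y : dotv x y ^+ 2 <= normsq x * normsq y.
Proof.
have [->|y0] := eqVneq y 0; first by rewrite /normsq !dotv0r expr0n mulr0.
have ypos : 0 < normsq y.
  by rewrite lt_def normsq_ge0 andbT; apply: contra y0 => /eqP/normsq_eq0->.
have := normsq_ge0 (normsq y *: x - dotv x y *: y).
rewrite /normsq !(dotvBr, dotvDl, dotvZl, dotvZr) -!scaleNr !dotvZl (dotvC y x).
set a := dotv y y; set b := dotv x y; set c := dotv x x.
have -> : a * (a * c + - b * b) - b * (a * b + - b * a) = a * (c * a - b ^+ 2).
  by ring.
by rewrite pmulr_rge0 // subr_ge0.
Qed.

Lemma dotv_le x y : dotv x y <= vnorm x * vnorm y.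
Proof.
rewrite !vnormE -sqrtrM ?normsq_ge0 //; apply: le_trans (ler_norm _) _.
by rewrite -sqrtr_sqr ler_sqrt ?dotv_sqr_le // mulr_ge0 ?normsq_ge0.
Qed.

Lemma vnormD x y : vnorm (x + y) <= vnorm x + vnorm y.
Proof.
rewrite -[vnorm x + _]ger0_norm ?addr_ge0 ?vnorm_ge0 // -sqrtr_sqr vnormE.
rewrite ler_sqrt ?sqr_ge0 // /normsq dotvDl !dotvDr (dotvC y x) sqrrD !vnorm_sqr.
by have := dotv_le x y; rewrite /normsq; lra.
Qed.

End InnerProduct.

Lemma dotv_mulmx m n (M : 'M[R]_(m, n)) x y : dotv x (M *m y) = dotv (M^T *m x) y.
Proof. by rewrite !dotvE trmx_mul trmxK mulmxA. Qed.

Lemma orthogonal_trmx_mul n (U : 'M[R]_n) : Defs.orthogonal U -> U^T *m U = 1%:M.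
Proof. exact: mulmx1C. Qed.

Lemma normsq_isometry m n (M : 'M[R]_(m, n)) x :
  M^T *m M = 1%:M -> normsq (M *m x) = normsq x.
Proof. by move=> MM; rewrite /normsq dotv_mulmx mulmxA MM mul1mx. Qed.

Lemma normsq_orthogonal n (U : 'M[R]_n) x :
  Defs.orthogonal U -> normsq (U *m x) = normsq x.
Proof. by move=> /orthogonal_trmx_mul; apply: normsq_isometry. Qed.

Lemma normsq_orthogonal_tr n (U : 'M[R]_n) x :
  Defs.orthogonal U -> normsq (U^T *m x) = normsq x.
Proof. by move=> oU; apply: normsq_isometry; rewrite trmxK. Qed.

Lemma mulmx_entry_dotv m n (M : 'M[R]_(m, n)) x i : (M *m x) i 0 = dotv (row i M)^T x.
Proof. by rewrite !mxE; apply: eq_bigr => j _; rewrite !mxE. Qed.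

Section SpectralNorm.
Local Open Scope classical_set_scope.
Variables m n : nat.
Implicit Type M : 'M[R]_(m, n).

Lemma specnorm_ub M x : vnorm x <= 1 -> vnorm (M *m x) <= specnorm M.
Proof.
move=> x1; apply: ub_le_sup; last by exists x.
exists (Num.sqrt (\sum_(i < m) normsq (row i M)^T)) => _ [y y1 <-].
rewrite vnormE ler_sqrt ?sumr_ge0 // => [|i _]; last exact: normsq_ge0.
have y1' : normsq y <= 1.
  by rewrite -vnorm_sqr -(expr1n _ 2) lerXn2r ?nnegrE ?vnorm_ge0.
apply: le_trans (_ : \sum_(i < m) normsq (row i M)^T * normsq y <= _).
  by apply: ler_sum => i _; rewrite -expr2 mulmx_entry_dotv dotv_sqr_le.
by rewrite -mulr_suml ler_piMr ?sumr_ge0 // => i _; apply: normsq_ge0.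
Qed.

Lemma specnorm_ge0 M : 0 <= specnorm M.
Proof.
by apply: le_trans (specnorm_ub M (x := 0) _); rewrite ?mulmx0 vnorm0 ?ler01.
Qed.

Lemma vnorm_mulmx_le M x : vnorm (M *m x) <= specnorm M * vnorm x.
Proof.
have [->|x0] := eqVneq x 0; first by rewrite mulmx0 !vnorm0 mulr0.
have xpos : 0 < vnorm x.
  rewrite lt_def vnorm_ge0 andbT vnormE sqrtr_eq0 -ltNge lt_def normsq_ge0 andbT.
  by apply: contra x0 => /eqP/normsq_eq0->.
have := specnorm_ub M (x := (vnorm x)^-1 *: x).
rewrite -scalemxAr !vnormZ ger0_norm ?invr_ge0 ?vnorm_ge0 // mulVf ?gt_eqF //.
by move=> /(_ (lexx _)); rewrite -(ler_pM2l xpos) mulrA mulfV ?gt_eqF // mul1r mulrC.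
Qed.

Lemma vnorm_trmx_mulmx_le M y : vnorm (M^T *m y) <= specnorm M * vnorm y.
Proof.
have [z0|zpos] := eqVneq (vnorm (M^T *m y)) 0.
  by rewrite z0 mulr_ge0 ?specnorm_ge0 ?vnorm_ge0.
have {}zpos : 0 < vnorm (M^T *m y) by rewrite lt_def zpos vnorm_ge0.
rewrite -(ler_pM2l zpos) -expr2 vnorm_sqr /normsq -dotv_mulmx dotvC mulrCA.
apply: le_trans (dotv_le _ _) _.
by rewrite mulrA ler_wpM2r ?vnorm_ge0 ?vnorm_mulmx_le.
Qed.

Lemma normsq_mulmx_le M x : normsq (M *m x) <= specnorm M ^+ 2 * normsq x.
Proof.
rewrite -!vnorm_sqr -exprMn lerXn2r ?nnegrE ?mulr_ge0 ?vnorm_ge0 ?specnorm_ge0 //.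
exact: vnorm_mulmx_le.
Qed.

Lemma normsq_trmx_mulmx_le M y : normsq (M^T *m y) <= specnorm M ^+ 2 * normsq y.
Proof.
rewrite -!vnorm_sqr -exprMn lerXn2r ?nnegrE ?mulr_ge0 ?vnorm_ge0 ?specnorm_ge0 //.
exact: vnorm_trmx_mulmx_le.
Qed.

Lemma specnormN M : specnorm (- M) = specnorm M.
Proof.
rewrite /specnorm; congr sup; apply/seteqP; split=> _ [x x1 <-]; exists x => //.
  by rewrite mulNmx vnormN.
by rewrite mulNmx vnormN.
Qed.

End SpectralNorm.

(* The index [p] is a [nat], and [evec n p = 0] for [n <= p]: one index then
   addresses singular vectors on both sides of a rectangular matrix. *)
Definition evec n (p : nat) : 'cV[R]_n := \col_i ((i : nat) == p)%:R.

Lemma sum_indicator_mul n p (F : 'I_n -> R) :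
  \sum_(i < n) ((i : nat) == p)%:R * F i = oapp F 0 (insub p).
Proof.
case: insubP => [i _ <-|p_ge] /=.
  rewrite (bigD1 i) //= eqxx mul1r big1 ?addr0 // => j ji.
  by rewrite (_ : (j : nat) == i = false) ?mul0r //; apply/negbTE.
rewrite big1 // => j _; rewrite (_ : (j : nat) == p = false) ?mul0r //.
by apply/negbTE; apply: contra p_ge => /eqP <-.
Qed.

Lemma sum_indicator n p : \sum_(i < n) ((i : nat) == p)%:R = (p < n)%:R :> R.
Proof.
under eq_bigr do rewrite -[_%:R]mulr1.
by rewrite (sum_indicator_mul p (fun=> 1)); case: insubP => [i -> _|/negbTE ->].
Qed.

Lemma dotv_evec n p (y : 'cV[R]_n) :
  dotv (evec n p) y = oapp (fun i => y i 0) 0 (insub p).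
Proof. by rewrite -sum_indicator_mul; apply: eq_bigr => i _; rewrite mxE. Qed.

Lemma dotv_evec_ord n (i : 'I_n) (y : 'cV[R]_n) : dotv (evec n i) y = y i 0.
Proof. by rewrite dotv_evec; case: insubP => [j _ /val_inj ->|]; rewrite ?ltn_ord. Qed.

Lemma normsq_evec_le1 n p : normsq (evec n p) <= 1.
Proof.
rewrite /normsq dotv_evec; case: insubP => [i _ ip|] /=; last by rewrite ler01.
by rewrite mxE -ip eqxx.
Qed.

Lemma bessel_evec k n (y : 'cV[R]_n) : \sum_(p < k) dotv (evec n p) y ^+ 2 <= normsq y.
Proof.
have coord_sqr p : dotv (evec n p) y ^+ 2 = \sum_(i < n) ((i : nat) == p)%:R * y i 0 ^+ 2.
  by rewrite dotv_evec sum_indicator_mul; case: insub => [i|] /=; rewrite ?expr0n.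
under eq_bigr do rewrite coord_sqr.
rewrite exchange_big /=; apply: ler_sum => i _.
rewrite -mulr_suml -expr2; under eq_bigr do rewrite eq_sym.
by rewrite sum_indicator; case: (i < k)%N; rewrite ?mul1r ?mul0r ?sqr_ge0.
Qed.

Lemma bessel k n (U : 'M[R]_n) (y : 'cV[R]_n) :
  Defs.orthogonal U -> \sum_(p < k) dotv (U *m evec n p) y ^+ 2 <= normsq y.
Proof.
move=> oU; under eq_bigr do rewrite dotvC dotv_mulmx dotvC.
by apply: le_trans (bessel_evec _ _) _; rewrite normsq_orthogonal_tr.
Qed.

Lemma parseval n (U : 'M[R]_n) (y : 'cV[R]_n) :
  Defs.orthogonal U -> \sum_(p < n) dotv (U *m evec n p) y ^+ 2 = normsq y.
Proof.
move=> oU; rewrite -(normsq_orthogonal_tr y oU); apply: eq_bigr => p _.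
by rewrite dotvC dotv_mulmx dotvC dotv_evec_ord expr2.
Qed.

Definition trunc_sv (s : nat -> R) (c q : nat) : R := if (q < c)%N then s q else 0.

Section DiagRect.
Variables (m n : nat) (s : nat -> R).
Hypothesis s_vanish : forall k, (minn m n <= k)%N -> s k = 0.

Lemma trunc_sv_min q : trunc_sv s (minn m n) q = s q.
Proof. by rewrite /trunc_sv; case: ltnP => // /s_vanish ->. Qed.

Variable c : nat.
Local Notation D := (diag_rect m n s c).

Lemma diag_rect_mul_evec q : D *m evec n q = trunc_sv s c q *: evec m q.
Proof.
apply/matrixP => i j; rewrite ord1 !mxE; under eq_bigr do rewrite !mxE mulrC.
rewrite sum_indicator_mul /trunc_sv; case: insubP => [l _ <-|q_ge] /=.
  by case: (eqVneq (i : nat) l) => [->|]; rewrite ?mulr1 ?mulr0.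
case: (eqVneq (i : nat) q) => [iq|]; last by rewrite mulr0.
rewrite s_vanish ?if_same ?mul0r // -iq geq_min.
by move: q_ge; rewrite -iq -leqNgt => ->; rewrite orbT.
Qed.

Lemma trmx_diag_rect_mul_evec p : D^T *m evec m p = trunc_sv s c p *: evec n p.
Proof.
apply/matrixP => i j; rewrite ord1 !mxE; under eq_bigr do rewrite !mxE mulrC.
rewrite sum_indicator_mul /trunc_sv; case: insubP => [l _ <-|p_ge] /=.
  by case: (eqVneq (l : nat) i) => [->|]; rewrite ?mulr1 ?mulr0.
case: (eqVneq (i : nat) p) => [ip|]; last by rewrite mulr0.
rewrite s_vanish ?if_same ?mul0r // -ip geq_min.
by move: p_ge; rewrite -ip -leqNgt => ->.
Qed.

Lemma normsq_diag_rect_mul (x : 'cV[R]_n) :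
  normsq (D *m x) = \sum_(i < n) trunc_sv s c i ^+ 2 * x i 0 ^+ 2.
Proof.
rewrite /normsq dotv_mulmx; apply: eq_bigr => i _.
rewrite -[(D^T *m _) i 0](dotv_evec_ord i) dotv_mulmx trmxK diag_rect_mul_evec.
by rewrite dotvZl dotv_mulmx trmx_diag_rect_mul_evec dotvZl dotv_evec_ord; ring.
Qed.

Variables (U : 'M[R]_m) (V : 'M[R]_n).

Lemma svd_dotv_left p w : Defs.orthogonal U ->
  dotv (U *m evec m p) ((U *m D *m V^T) *m w) = trunc_sv s c p * dotv (V *m evec n p) w.
Proof.
move=> oU; rewrite dotv_mulmx !trmx_mul trmxK -!mulmxA (mulmxA U^T).
by rewrite orthogonal_trmx_mul // mul1mx trmx_diag_rect_mul_evec -scalemxAr dotvZl.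
Qed.

Lemma svd_dotv_right z q : Defs.orthogonal V ->
  dotv z ((U *m D *m V^T) *m (V *m evec n q)) = trunc_sv s c q * dotv z (U *m evec m q).
Proof.
move=> oV; rewrite -!mulmxA (mulmxA V^T) orthogonal_trmx_mul // mul1mx.
by rewrite diag_rect_mul_evec -!scalemxAr dotvZr.
Qed.

End DiagRect.

Lemma nonincreasing_sv (s : nat -> R) : (forall k, s k.+1 <= s k) ->
  {homo s : i j / (i <= j)%N >-> j <= i}.
Proof.
move=> s_dec i j; apply: (homo_leq (r := fun a b => b <= a)) => // b a c ab bc.
exact: le_trans bc ab.
Qed.

Lemma exists_nonzero_kernel m n (C : 'M[R]_(m, n)) :
  (m < n)%N -> exists2 c : 'cV[R]_n, c != 0 & C *m c = 0.
Proof.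
move=> mn; have : kermx C^T != 0.
  by rewrite kermx_eq0 /row_free mxrank_tr neq_ltn (leq_ltn_trans (rank_leq_row C)).
case/rowV0Pn => w /sub_kermxP wC w0; exists w^T; first by rewrite trmx_eq0.
by rewrite -[C]trmxK -trmx_mul wC trmx0.
Qed.

(* The conditions are [n - 1] linear equations: [k] rows of [Z] and the
   [n - 1 - k] coordinates above [k]. *)
Lemma exists_nonzero_supported_perp n k (Z : 'M[R]_n) : (k < n)%N ->
  exists c : 'cV[R]_n, [/\ c != 0, forall l : 'I_n, (k < l)%N -> c l 0 = 0
                       & forall j : 'I_n, (j < k)%N -> (Z *m c) j 0 = 0].
Proof.
move=> kn; pose C : 'M[R]_(n.-1, n) := \matrix_j
  if (j < k)%N then row (widen_ord (leq_pred n) j) Z else (evec n j.+1)^T.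
have [|c c0 Cc] := exists_nonzero_kernel C; first by lia.
have Cc_j j : dotv (row j C)^T c = 0 by rewrite -mulmx_entry_dotv Cc mxE.
exists c; split=> // [l kl|j jk].
  have lj : (l.-1 < n.-1)%N by have := ltn_ord l; lia.
  have := Cc_j (Ordinal lj); rewrite rowK /= ifN; last by rewrite -leqNgt; lia.
  by rewrite trmxK prednK ?dotv_evec_ord //; lia.
have jn : (j < n.-1)%N by lia.
have := Cc_j (Ordinal jn); rewrite rowK /= jk mulmx_entry_dotv.
by rewrite (_ : widen_ord _ _ = j) //; apply: val_inj.
Qed.

Section SingularValueBounds.
Variables (m n : nat) (M : 'M[R]_(m, n)) (U : 'M[R]_m) (s : nat -> R) (V : 'M[R]_n).
Hypothesis svdM : is_svd M U s V.

Lemma normsq_svd_mul (c : 'cV[R]_n) :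
  normsq (M *m (V *m c)) = \sum_(i < n) s i ^+ 2 * c i 0 ^+ 2.
Proof.
case: svdM => [[oU oV] _ _ s_vanish ->].
rewrite -!mulmxA (mulmxA V^T) orthogonal_trmx_mul // mul1mx normsq_orthogonal //.
by rewrite normsq_diag_rect_mul //; under eq_bigr do rewrite trunc_sv_min //.
Qed.

Lemma svd_mul_ge k (c : 'cV[R]_n) : (forall l : 'I_n, (k < l)%N -> c l 0 = 0) ->
  s k * vnorm c <= vnorm (M *m (V *m c)).
Proof.
case: svdM => [_ s_ge0 s_dec _ _] c_vanish.
rewrite -ler_sqr ?nnegrE ?mulr_ge0 ?vnorm_ge0 // exprMn !vnorm_sqr normsq_svd_mul.
rewrite mulr_sumr; apply: ler_sum => i _; rewrite -expr2.
have [ik|/c_vanish->] := leqP i k; last by rewrite expr0n /= !mulr0.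
by rewrite ler_wpM2r ?sqr_ge0 // lerXn2r ?nnegrE ?nonincreasing_sv.
Qed.

Lemma svd_mul_le k (c : 'cV[R]_n) : (forall l : 'I_n, (l < k)%N -> c l 0 = 0) ->
  vnorm (M *m (V *m c)) <= s k * vnorm c.
Proof.
case: svdM => [_ s_ge0 s_dec _ _] c_vanish.
rewrite -ler_sqr ?nnegrE ?mulr_ge0 ?vnorm_ge0 // exprMn !vnorm_sqr normsq_svd_mul.
rewrite mulr_sumr; apply: ler_sum => i _; rewrite -expr2.
have [/c_vanish->|ki] := ltnP i k; first by rewrite expr0n /= !mulr0.
by rewrite ler_wpM2r ?sqr_ge0 // lerXn2r ?nnegrE ?nonincreasing_sv.
Qed.

End SingularValueBounds.

(* Courant-Fischer: test [M + D] and [M] on a nonzero vector in the span of the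
   top [k + 1] right singular vectors of [M + D] that is orthogonal to the top
   [k] right singular vectors of [M]. *)
Lemma weyl_sv m n (M D : 'M[R]_(m, n)) UM sM VM UN sN VN :
  is_svd M UM sM VM -> is_svd (M + D) UN sN VN -> forall k, sN k <= sM k + specnorm D.
Proof.
move=> svdM svdN k; have [[_ oVM] sM_ge0 _ _ _] := svdM.
have [[_ oVN] _ _ sN_vanish _] := svdN.
have [mn_le_k|] := leqP (minn m n) k.
  by rewrite sN_vanish ?addr_ge0 ?sM_ge0 ?specnorm_ge0.
rewrite leq_min => /andP[_ kn].
have [c [c0 c_top c_perp]] := exists_nonzero_supported_perp (VM^T *m VN) kn.
have cpos : 0 < vnorm c.
  rewrite vnormE sqrtr_gt0 lt_def normsq_ge0 andbT.
  by apply: contra c0 => /eqP/normsq_eq0->.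
have Zc_norm : vnorm (VM^T *m VN *m c) = vnorm c.
  by rewrite !vnormE -mulmxA normsq_orthogonal_tr ?normsq_orthogonal.
have VNc : VN *m c = VM *m (VM^T *m VN *m c).
  by rewrite !mulmxA (oVM : VM *m VM^T = 1%:M) mul1mx.
have lower := svd_mul_ge svdN c_top.
have upper := svd_mul_le svdM c_perp; rewrite -VNc Zc_norm in upper.
have err : vnorm (D *m (VN *m c)) <= specnorm D * vnorm c.
  by rewrite (vnormE c) -(normsq_orthogonal c oVN) -vnormE vnorm_mulmx_le.
rewrite -(ler_pM2r cpos) mulrDl; apply: (le_trans lower).
by rewrite mulmxDl; apply: le_trans (vnormD _ _) (lerD upper err).
Qed.

Lemma mulmx_evec_entry m n (M : 'M[R]_(m, n)) (q : 'I_n) i : (M *m evec n q) i 0 = M i q.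
Proof. by rewrite mulmx_entry_dotv dotvC dotv_evec_ord !mxE. Qed.

Lemma sum_sqr_orthogonal_coords m n (M : 'M[R]_(m, n)) (U : 'M[R]_m) (V : 'M[R]_n) :
  Defs.orthogonal U -> Defs.orthogonal V ->
  \sum_(i < m) \sum_(j < n) M i j ^+ 2
  = \sum_(p < m) \sum_(q < n) dotv (U *m evec m p) (M *m (V *m evec n q)) ^+ 2.
Proof.
move=> oU oV; rewrite [RHS]exchange_big /=.
under [RHS]eq_bigr => q _.
  rewrite parseval // mulmxA /normsq /dotv.
  under eq_bigr do rewrite mulmx_evec_entry.
over.
rewrite [RHS]exchange_big /=; apply: eq_bigr => i _.
have row_sqr (N : 'M[R]_(m, n)) : normsq (row i N)^T = \sum_(j < n) N i j ^+ 2.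
  by apply: eq_bigr => j _; rewrite !mxE expr2.
rewrite -row_sqr; under [RHS]eq_bigr do rewrite -expr2.
by rewrite -row_sqr row_mul trmx_mul normsq_orthogonal_tr.
Qed.

Lemma sum_indicator_lt d r : \sum_(p < d) ((p < r)%N%:R : R) <= r%:R.
Proof.
under eq_bigr do rewrite -sum_indicator.
rewrite exchange_big /=; apply: le_trans (_ : \sum_(j < r) (1 : R) <= _).
  apply: ler_sum => j _; under eq_bigr do rewrite eq_sym.
  by rewrite sum_indicator; case: (j < d)%N; rewrite ?ler01.
by rewrite sumr_const card_ord.
Qed.

Lemma sum_indicator_mul_le (d d' r : nat) (F : nat -> nat -> R) c :
  (forall p q, 0 <= F p q) -> (forall p, \sum_(q < d') F p q <= c) ->
  \sum_(p < d) \sum_(q < d') ((p < r)%N%:R : R) * F p q <= r%:R * c.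
Proof.
move=> F_ge0 F_row; have c_ge0 : 0 <= c.
  by apply: le_trans (F_row 0%N); apply: sumr_ge0.
under eq_bigr do rewrite -mulr_sumr.
apply: le_trans (_ : \sum_(p < d) ((p < r)%N%:R : R) * c <= _).
  by apply: ler_sum => p _; rewrite ler_wpM2l ?ler0n.
by rewrite -mulr_suml ler_wpM2r ?sum_indicator_lt.
Qed.

Lemma gap_mul_le (s t x a b g : R) : 0 < g -> 0 <= s -> s + g <= t ->
  (t ^+ 2 - s ^+ 2) * x = s * a + t * b -> g * `|s * x| <= s * (`|a| + `|b|).
Proof.
move=> g0 s0 st xE; have t0 : 0 <= t by lra.
have sx_eq : `|s * x| * ((t - s) * (t + s)) = s * `|s * a + t * b|.
  have ts0 : 0 <= t ^+ 2 - s ^+ 2 by nra.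
  by rewrite -xE !normrM (ger0_norm s0) (ger0_norm ts0); ring.
have sab_le : `|s * a + t * b| <= (t + s) * (`|a| + `|b|).
  apply: le_trans (ler_normD _ _) _; rewrite !normrM (ger0_norm s0) (ger0_norm t0).
  by have := mulr_ge0 t0 (normr_ge0 a); have := mulr_ge0 s0 (normr_ge0 b); nra.
have sx_le : `|s * x| * (t - s) <= s * (`|a| + `|b|).
  rewrite -(@ler_pM2r _ (t + s)); last by lra.
  by rewrite -mulrA sx_eq -mulrA ler_wpM2l // [_ * (t + s)]mulrC.
by apply: le_trans sx_le; rewrite mulrC ler_wpM2l ?normr_ge0 //; lra.
Qed.

Lemma sqr_perturb_le (g L f h z : R) : 0 < g -> 0 <= L ->
  g * `|z| <= L * (`|f| + `|h|) ->
  g ^+ 2 * (f + z) ^+ 2 <= (2 * g ^+ 2 + 4 * L ^+ 2) * (f ^+ 2 + h ^+ 2).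
Proof.
move=> g0 L0 z_le.
have fh_sqr : (`|f| + `|h|) ^+ 2 <= 2 * (f ^+ 2 + h ^+ 2).
  rewrite -(real_normK (num_real f)) -(real_normK (num_real h)).
  by have := sqr_ge0 (`|f| - `|h|); rewrite sqrrB sqrrD; lra.
have gz : g ^+ 2 * z ^+ 2 <= 2 * L ^+ 2 * (f ^+ 2 + h ^+ 2).
  rewrite -(real_normK (num_real z)) -exprMn.
  apply: le_trans (_ : (L * (`|f| + `|h|)) ^+ 2 <= _).
    by rewrite ler_sqr ?nnegrE ?mulr_ge0 ?addr_ge0 ?normr_ge0 // ltW.
  by have := ler_wpM2l (sqr_ge0 L) fh_sqr; rewrite exprMn; lra.
have := sqr_ge0 (f - z); have := sqr_ge0 g; have := sqr_ge0 h; have := sqr_ge0 L.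
have := sqr_ge0 f; nra.
Qed.

(* With [f := sb x - sa y] and [h := sb y - sa x], the identity
   [(sb^2 - sa^2) y = sa f + sb h] (or its mirror image in [x]) lets [gap_mul_le]
   bound the discarded term when exactly one singular value is kept. *)
Lemma trunc_coord_sqr_le (bp bq : bool) (sb sa x y g L : R) :
  0 < g -> 0 <= sb -> 0 <= sa -> 0 <= L ->
  (bp && ~~ bq -> sa + g <= sb /\ sa <= L) ->
  (~~ bp && bq -> sb + g <= sa /\ sb <= L) ->
  g ^+ 2 * ((if bp then sb else 0) * x - (if bq then sa else 0) * y) ^+ 2
  <= (2 * g ^+ 2 + 4 * L ^+ 2) * (bp%:R + bq%:R)
     * ((sb * x - sa * y) ^+ 2 + (sb * y - sa * x) ^+ 2).
Proof.
move=> g0 sb0 sa0 L0; set f := sb * x - sa * y; set h := sb * y - sa * x.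
case: bp; case: bq => /= keep_p keep_q.
- rewrite -/f; have := mulr_ge0 (sqr_ge0 g) (sqr_ge0 f).
  have := mulr_ge0 (sqr_ge0 g) (sqr_ge0 h).
  have := mulr_ge0 (sqr_ge0 L) (addr_ge0 (sqr_ge0 f) (sqr_ge0 h)); lra.
- have [gap sa_le] := keep_p isT.
  have z_le : g * `|sa * y| <= L * (`|f| + `|h|).
    apply: le_trans (gap_mul_le (x := y) (a := f) (b := h) g0 sa0 gap _) _.
      by rewrite /f /h; ring.
    by rewrite ler_wpM2r ?addr_ge0 ?normr_ge0.
  rewrite mul0r subr0 addr0 mulr1 (_ : sb * x = f + sa * y); last by rewrite /f; ring.
  exact: sqr_perturb_le z_le.
- have [gap sb_le] := keep_q isT.
  have z_le : g * `|- (sb * x)| <= L * (`|f| + `|h|).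
    rewrite normrN -(normrN f) -(normrN h).
    apply: le_trans (gap_mul_le (x := x) (a := - f) (b := - h) g0 sb0 gap _) _.
      by rewrite /f /h; ring.
    by rewrite ler_wpM2r ?addr_ge0 ?normr_ge0.
  rewrite mul0r sub0r add0r mulr1 (_ : - (sa * y) = f - sb * x); last by rewrite /f; ring.
  exact: sqr_perturb_le z_le.
- by rewrite !mul0r subr0 expr0n /= mulr0 addr0 mulr0 mul0r.
Qed.

Lemma normsq_orthogonal_evec_le1 n (U : 'M[R]_n) p :
  Defs.orthogonal U -> normsq (U *m evec n p) <= 1.
Proof. by move=> oU; rewrite normsq_orthogonal ?normsq_evec_le1. Qed.

Section TruncationPerturbation.
Variables (d1 d2 : nat) (A E : 'M[R]_(d1, d2)) (UA UB : 'M[R]_d1) (sA sB : nat -> R).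
Variables (VA VB : 'M[R]_d2) (r : nat).
Hypotheses (svdA : is_svd A UA sA VA) (svdB : is_svd (A + E) UB sB VB).

Local Notation e := (specnorm E).
Local Notation uA p := (UA *m evec d1 p).
Local Notation uB p := (UB *m evec d1 p).
Local Notation vA q := (VA *m evec d2 q).
Local Notation vB q := (VB *m evec d2 q).

Let x p q := dotv (vB p) (vA q).
Let y p q := dotv (uB p) (uA q).
Let f p q := dotv (uB p) (E *m vA q).
Let h p q := dotv (uA q) (E *m vB p).
Let G p q := dotv (uB p) ((svd_trunc UB sB VB r - svd_trunc UA sA VA r) *m vA q).

Lemma E_coord_left p q : f p q = sB p * x p q - sA q * y p q.
Proof.
have [[_ oVA] _ _ sA_vanish eA] := svdA; have [[oUB _] _ _ sB_vanish eB] := svdB.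
rewrite /f -[E](addKr A) addrC mulmxBl dotvBr eB svd_dotv_left // trunc_sv_min //.
by rewrite eA svd_dotv_right // trunc_sv_min.
Qed.

Lemma E_coord_right p q : h p q = sB p * y p q - sA q * x p q.
Proof.
have [[oUA _] _ _ sA_vanish eA] := svdA; have [[_ oVB] _ _ sB_vanish eB] := svdB.
rewrite /h -[E](addKr A) addrC mulmxBl dotvBr eB svd_dotv_right // trunc_sv_min //.
by rewrite eA svd_dotv_left // trunc_sv_min // /x /y dotvC (dotvC (vA q)).
Qed.

Lemma trunc_diff_coord p q : G p q = trunc_sv sB r p * x p q - trunc_sv sA r q * y p q.
Proof.
have [[_ oVA] _ _ sA_vanish _] := svdA; have [[oUB _] _ _ sB_vanish _] := svdB.
by rewrite /G mulmxBl dotvBr /svd_trunc svd_dotv_left // svd_dotv_right.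
Qed.

Lemma sum_E_coord_row p : \sum_(q < d2) (f p q ^+ 2 + h p q ^+ 2) <= 2 * e ^+ 2.
Proof.
have [[oUA oVA] _ _ _ _] := svdA; have [[oUB oVB] _ _ _ _] := svdB.
rewrite big_split /= mulr2n mulrDl mul1r; apply: lerD.
  under eq_bigr do rewrite /f dotv_mulmx dotvC.
  apply: le_trans (bessel _ _ oVA) _; apply: le_trans (normsq_trmx_mulmx_le _ _) _.
  by rewrite ler_piMr ?sqr_ge0 ?normsq_orthogonal_evec_le1.
apply: le_trans (bessel _ _ oUA) _; apply: le_trans (normsq_mulmx_le _ _) _.
by rewrite ler_piMr ?sqr_ge0 ?normsq_orthogonal_evec_le1.
Qed.

Lemma sum_E_coord_col q : \sum_(p < d1) (f p q ^+ 2 + h p q ^+ 2) <= 2 * e ^+ 2.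
Proof.
have [[oUA oVA] _ _ _ _] := svdA; have [[oUB oVB] _ _ _ _] := svdB.
rewrite big_split /= mulr2n mulrDl mul1r; apply: lerD.
  apply: le_trans (bessel _ _ oUB) _; apply: le_trans (normsq_mulmx_le _ _) _.
  by rewrite ler_piMr ?sqr_ge0 ?normsq_orthogonal_evec_le1.
under eq_bigr do rewrite /h dotv_mulmx dotvC.
apply: le_trans (bessel _ _ oVB) _; apply: le_trans (normsq_trmx_mulmx_le _ _) _.
by rewrite ler_piMr ?sqr_ge0 ?normsq_orthogonal_evec_le1.
Qed.

Hypothesis gapA : sA r < sA r.-1.
Hypothesis normE_le : e <= (sA r.-1 - sA r) / 2.
Local Notation g := ((sA r.-1 - sA r) / 2).

Lemma kept_sv_gap p q : (p < r)%N -> (r <= q)%N -> sA q + g <= sB p.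
Proof.
have [_ _ sA_dec _ _] := svdA; have [_ _ sB_dec _ _] := svdB.
move=> pr rq; have sAq := nonincreasing_sv sA_dec rq.
have sBp : sB r.-1 <= sB p by apply: (nonincreasing_sv sB_dec); lia.
have svdA' : is_svd (A + E + - E) UA sA VA by rewrite addrK.
have := weyl_sv svdB svdA' r.-1; rewrite specnormN.
by have := normE_le; lra.
Qed.

Lemma discarded_sv_gap p q : (r <= p)%N -> (q < r)%N -> sB p + g <= sA q.
Proof.
have [_ _ sA_dec _ _] := svdA; have [_ _ sB_dec _ _] := svdB.
move=> rp qr; have sBp := nonincreasing_sv sB_dec rp.
have sAq : sA r.-1 <= sA q by apply: (nonincreasing_sv sA_dec); lia.
by have := weyl_sv svdA svdB r; have := normE_le; lra.
Qed.

Lemma trunc_diff_coord_sqr_le p q :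
  g ^+ 2 * G p q ^+ 2 <= (2 * g ^+ 2 + 4 * (sA r + e) ^+ 2)
    * ((p < r)%N%:R + (q < r)%N%:R) * (f p q ^+ 2 + h p q ^+ 2).
Proof.
have [_ sA_ge0 sA_dec _ _] := svdA; have [_ sB_ge0 sB_dec _ _] := svdB.
have e_ge0 := specnorm_ge0 E.
rewrite trunc_diff_coord E_coord_left E_coord_right.
apply: trunc_coord_sqr_le; rewrite ?addr_ge0 ?divr_gt0 ?subr_gt0 //.
  move=> /andP[pr]; rewrite -leqNgt => rq; split; first exact: kept_sv_gap.
  by apply: le_trans (nonincreasing_sv sA_dec rq) _; rewrite lerDl.
move=> /andP[]; rewrite -leqNgt => rp qr; split; first exact: discarded_sv_gap.
exact: le_trans (nonincreasing_sv sB_dec rp) (weyl_sv svdA svdB r).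
Qed.


Lemma sum_trunc_diff_coord_sqr_le :
  g ^+ 2 * (\sum_(p < d1) \sum_(q < d2) G p q ^+ 2)
  <= (2 * g ^+ 2 + 4 * (sA r + e) ^+ 2) * (4 * r%:R * e ^+ 2).
Proof.
set K := 2 * g ^+ 2 + 4 * _ ^+ 2; pose F p q := f p q ^+ 2 + h p q ^+ 2.
have F_ge0 p q : 0 <= F p q by rewrite addr_ge0 ?sqr_ge0.
have K_ge0 : 0 <= K by rewrite /K; have := sqr_ge0 g; have := sqr_ge0 (sA r + e); lra.
rewrite mulr_sumr; apply: le_trans (_ : _ <= \sum_(p < d1) \sum_(q < d2)
    K * ((p < r)%N%:R * F p q + (q < r)%N%:R * F p q)) _.
  apply: ler_sum => p _; rewrite mulr_sumr; apply: ler_sum => q _.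
  by rewrite -mulrDl mulrA trunc_diff_coord_sqr_le.
under eq_bigr do rewrite -mulr_sumr.
rewrite -mulr_sumr ler_wpM2l //; under eq_bigr do rewrite big_split /=.
rewrite big_split /= (_ : 4 * r%:R * e ^+ 2 = r%:R * (2 * e ^+ 2) + r%:R * (2 * e ^+ 2)).
  apply: lerD; first exact: sum_indicator_mul_le _ _ F_ge0 sum_E_coord_row.
  rewrite exchange_big /=.
  exact: sum_indicator_mul_le _ _ (fun q p => F_ge0 p q) sum_E_coord_col.
by ring.
Qed.

Lemma frob_trunc_diff_le :
  frob (svd_trunc UB sB VB r - svd_trunc UA sA VA r)
  <= 8 * Num.sqrt r%:R * e * (1 + Num.sqrt (sA r * sA 0%N) / (sA r.-1 - sA r)).
Proof.
have [[_ oVA] sA_ge0 sA_dec _ _] := svdA; have [[oUB _] _ _ _ _] := svdB.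
set T := _ / _; have e_ge0 := specnorm_ge0 E.
have g_pos : 0 < g by rewrite divr_gt0 ?subr_gt0.
have T_ge0 : 0 <= T by rewrite divr_ge0 ?sqrtr_ge0 ?subr_ge0 ?ltW.
have sAr_le : sA r <= T * (sA r.-1 - sA r).
  rewrite /T divfK ?gt_eqF ?subr_gt0 // -[X in X <= _]ger0_norm // -sqrtr_sqr.
  by rewrite ler_sqrt ?mulr_ge0 // expr2 ler_wpM2l ?(nonincreasing_sv sA_dec).
have K_le : 2 * g ^+ 2 + 4 * (sA r + e) ^+ 2 <= g ^+ 2 * (16 * (1 + T) ^+ 2).
  have ae : sA r + e <= g * (2 * T + 1) by have := normE_le; lra.
  have ae0 : 0 <= sA r + e by rewrite addr_ge0.
  have : (sA r + e) ^+ 2 <= (g * (2 * T + 1)) ^+ 2.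
    by rewrite ler_sqr ?nnegrE // (le_trans ae0 ae).
  rewrite exprMn; have := mulr_ge0 (sqr_ge0 g) T_ge0; have := sqr_ge0 g; lra.
have S_le : \sum_(p < d1) \sum_(q < d2) G p q ^+ 2
    <= (8 * Num.sqrt r%:R * e * (1 + T)) ^+ 2.
  rewrite -(ler_pM2l (exprn_gt0 2 g_pos)); apply: le_trans sum_trunc_diff_coord_sqr_le _.
  apply: le_trans (ler_wpM2r _ K_le) _; first by rewrite !mulr_ge0 ?sqr_ge0.
  by rewrite !exprMn sqr_sqrtr //; lra.
rewrite /frob (sum_sqr_orthogonal_coords _ oUB oVA) -[X in _ <= X]ger0_norm.
  by rewrite -sqrtr_sqr ler_sqrt ?sqr_ge0.
by rewrite !mulr_ge0 ?sqrtr_ge0 ?addr_ge0.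
Qed.

End TruncationPerturbation.

Theorem lemma1 :
  exists C0 : R, 0 < C0 /\
  forall (d1 d2 : nat) (A E : 'M[R]_(d1, d2))
         (UA : 'M[R]_d1) (sA : nat -> R) (VA : 'M[R]_d2)
         (UB : 'M[R]_d1) (sB : nat -> R) (VB : 'M[R]_d2) (r : nat),
    is_svd A UA sA VA ->
    is_svd (A + E) UB sB VB ->
    (1 <= r)%N -> (r < maxn d1 d2)%N ->
    sA r < sA r.-1 ->
    specnorm E <= (sA r.-1 - sA r) / 2 ->
    frob (svd_trunc UB sB VB r - svd_trunc UA sA VA r)
      <= C0 * Num.sqrt (r%:R) * specnorm E
         * (1 + Num.sqrt (sA r * sA 0%N) / (sA r.-1 - sA r)).
Proof.
exists 8; split; first by [].
move=> d1 d2 A E UA sA VA UB sB VB r svdA svdB _ _ gapA normE_le.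
exact: (frob_trunc_diff_le svdA svdB gapA normE_le).
Qed.
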